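(* Let $p>q>1$ be relatively prime integers. For every $h\ge 0$, the set $\{w^{-1}L_{\frac pq}\cap A_p^h \mid w\in L_{\frac pq}\setminus\{\varepsilon\}\}$ is a partition of $A_p^h$ into $q^h$ non-empty languages.
   Context: $A_p=\{0,\ldots,p-1\}$. For $w=w_\ell\cdots w_0\in A_p^*$, $\mathrm{val}_{\frac pq}(w)=\sum_{i=0}^{\ell}\frac{w_i}{q}\left(\frac pq\right)^i$. Every integer $n\ge0$ has a unique representation $\mathrm{rep}_{\frac pq}(n)\in A_p^*$ not starting with $0$ with value $n$ ($\mathrm{rep}_{\frac pq}(0)=\varepsilon$), and $L_{\frac pq}=\{\mathrm{rep}_{\frac pq}(n): n\ge 0\}$. For a word $w$, $w^{-1}L=\{u: wu\in L\}$. *)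

From HB Require Import structures.
From mathcomp Require Import all_boot all_order all_algebra.
Set Implicit Arguments. Unset Strict Implicit. Unset Printing Implicit Defensive.
Import Order.TTheory GRing.Theory Num.Theory.
Local Open Scope ring_scope.

(* Words over A_p = {0,...,p-1} are sequences of 'I_p, written most
   significant digit first: w = w_l ... w_0 is the seq [:: w_l; ...; w_0]. *)

Definition digit (p : nat) (w : seq 'I_p) (i : nat) : nat :=
  nth 0%N (map (@nat_of_ord p) (rev w)) i.

Definition valpq (p q : nat) (w : seq 'I_p) : rat :=
  \sum_(i < size w) ((digit w i)%:R / q%:R) * (p%:R / q%:R) ^+ i.

Definition no_lead0 (p : nat) (w : seq 'I_p) : bool :=
  if w is a :: _ then (nat_of_ord a != 0)%N else true.

(* L_{p/q} = { rep_{p/q}(n) : n >= 0 }: the words not starting with 0 whose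
   value is a nonnegative integer (rep(n) is the unique such word of value n). *)
Definition inL (p q : nat) (w : seq 'I_p) : bool :=
  no_lead0 w && (valpq q w \is a Num.nat).

Definition quotL (p q h : nat) (w : seq 'I_p) : {set h.-tuple 'I_p} :=
  [set u : h.-tuple 'I_p | inL q (w ++ tval u)].

From HB Require Import structures.
From mathcomp Require Import all_boot all_order all_algebra.
From mathcomp Require Import ring zify.
Set Implicit Arguments. Unset Strict Implicit. Unset Printing Implicit Defensive.
Import Order.TTheory GRing.Theory Num.Theory.

(* For w in L of value N, a word u of length h lies in w^{-1}L iff
   (p/q)^h N + val u is an integer, i.e. iff q^h divides p^h N + q^h val u.
   Hence the quotient only depends on the residue r = N mod q^h.  As p^h is
   invertible modulo q^h, the q^h sets of words selected by the residues are
   pairwise disjoint and cover A_p^h.  Each of them is a quotient and is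
   nonempty, since every integer is the value of a word of L and every
   nonempty word of L extends inside L by one letter. *)

Lemma eqn_modMl_coprime a m x y : coprime a m ->
  (a * x == a * y %[mod m]) = (x == y %[mod m]).
Proof.
move=> co_am; wlog le_yx : x y / y <= x.
  by move=> IH; case/orP: (leq_total y x) => /IH //; rewrite eq_sym [RHS]eq_sym.
rewrite !eqn_mod_dvd ?leq_mul2l ?le_yx ?orbT // -mulnBr Gauss_dvdr //.
by rewrite coprime_sym.
Qed.

Lemma coprime_dvdn_addM_exists a m c : 0 < m -> coprime a m ->
  exists x, m %| a * x + c.
Proof.
move=> m_gt0; rewrite coprime_sym => /(coprimeP _ m_gt0)[[k l] /= bezout].
exists (l * c); have -> : a * (l * c) + c = k * c * m by nia.
exact: dvdn_mull.
Qed.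

Local Open Scope ring_scope.

Lemma natr_div_nat (R : archiNumFieldType) (a b : nat) : (0 < b)%N ->
  ((a%:R / b%:R : R) \is a Num.nat) = (b %| a)%N.
Proof.
move=> b_gt0; have b_neq0 : (b%:R : R) != 0 by rewrite pnatr_eq0 -lt0n.
apply/idP/idP => [/natrP[k ak] | /dvdnP[k ->]]; last by rewrite natrM mulfK ?natr_nat.
by apply/dvdnP; exists k; apply/eqP; rewrite -(eqr_nat R) natrM -ak mulfVK.
Qed.

Section RationalBase.
Variables p q : nat.

Lemma digit_cons (a : 'I_p) w i : (i < size w)%N -> digit (a :: w) i = digit w i.
Proof.
by move=> lt_iw; rewrite /digit rev_cons map_rcons nth_rcons size_map size_rev lt_iw.
Qed.

Lemma digit_cons_size (a : 'I_p) w : digit (a :: w) (size w) = a.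
Proof. by rewrite /digit rev_cons map_rcons nth_rcons size_map size_rev ltnn eqxx. Qed.

Lemma valpq_nil : valpq q ([::] : seq 'I_p) = 0.
Proof. by rewrite /valpq big_ord0. Qed.

Lemma valpq_cons (a : 'I_p) w :
  valpq q (a :: w) = a%:R / q%:R * (p%:R / q%:R) ^+ size w + valpq q w.
Proof.
rewrite /valpq big_ord_recr /= digit_cons_size addrC; congr (_ + _).
by apply: eq_bigr => i _; rewrite digit_cons.
Qed.

Lemma valpq_cat (w u : seq 'I_p) :
  valpq q (w ++ u) = (p%:R / q%:R) ^+ size u * valpq q w + valpq q u.
Proof.
elim: w => [|a w IHw]; first by rewrite valpq_nil mulr0 add0r.
by rewrite cat_cons !valpq_cons IHw size_cat exprD; ring.
Qed.

Fixpoint valnum (w : seq 'I_p) : nat :=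
  if w is a :: w' then a * p ^ size w' + q * valnum w' else 0.

Lemma valpq_neq_nil (w : seq 'I_p) (n : nat) :
  (0 < n)%N -> valpq q w = n%:R -> w != [::].
Proof.
move=> n_gt0; apply: contraPneq => ->.
by rewrite valpq_nil => /esym/eqP; rewrite pnatr_eq0 eqn0Ngt n_gt0.
Qed.

Hypothesis q_gt0 : (0 < q)%N.

Let q_neq0 : (q%:R : rat) != 0. Proof. by rewrite pnatr_eq0 -lt0n. Qed.

Let qX_gt0 h : (0 < q ^ h)%N. Proof. by rewrite expn_gt0 q_gt0. Qed.

Lemma valpqE (w : seq 'I_p) : valpq q w = (valnum w)%:R / (q ^ size w)%:R.
Proof.
elim: w => [|a w IHw]; first by rewrite valpq_nil mul0r.
rewrite valpq_cons IHw /= natrD !natrM !natrX exprS expr_div_n.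
by field; rewrite q_neq0 expf_neq0.
Qed.

Lemma inL_cat (w u : seq 'I_p) (N : nat) :
  w != [::] -> inL q w -> valpq q w = N%:R ->
  inL q (w ++ u) = (q ^ size u %| p ^ size u * N + valnum u)%N.
Proof.
move=> w_neq0 /andP[w_lead _] wN.
rewrite /inL valpq_cat wN valpqE -(natr_div_nat rat) ?expn_gt0 ?q_gt0 //.
case: w w_neq0 w_lead {wN} => //= a w _ ->.
rewrite natrD natrM !natrX expr_div_n; congr (_ \is a _).
by field; rewrite expf_neq0.
Qed.

Definition residue_class (h r : nat) : {set h.-tuple 'I_p} :=
  [set u : h.-tuple 'I_p | q ^ h %| p ^ h * r + valnum u]%N.

Lemma quotL_residue_class h (w : seq 'I_p) (N : nat) : w != [::] -> inL q w ->
  valpq q w = N%:R -> quotL q h w = residue_class h N.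
Proof.
by move=> w_neq0 Lw wN; apply/setP => u; rewrite !inE (inL_cat _ w_neq0 Lw wN) size_tuple.
Qed.

Lemma residue_class_mod h r : residue_class h (r %% q ^ h) = residue_class h r.
Proof. by apply/setP => u; rewrite !inE /dvdn -modnDml modnMmr modnDml. Qed.

Hypothesis q_lt_p : (q < p)%N.

Lemma exists_inL_valpq (n : nat) : exists w : seq 'I_p, inL q w /\ valpq q w = n%:R.
Proof.
elim/ltn_ind: n => n IHn; have [-> | n_gt0] := posnP n.
  by exists [::]; rewrite /inL valpq_nil rpred0.
have p_gt0 : (0 < p)%N := ltn_trans q_gt0 q_lt_p.
have qn_eq : (q * n = q * n %/ p * p + q * n %% p)%N := divn_eq _ _.
set m := (q * n %/ p)%N in qn_eq; pose a := Ordinal (ltn_pmod (q * n) p_gt0).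
have /IHn[w [Lw wm]] : (m < n)%N by rewrite ltn_divLR // mulnC ltn_pmul2l.
have wa_n : valpq q (rcons w a) = n%:R.
  rewrite -cats1 valpq_cat valpq_cons valpq_nil wm /= expr0 expr1 mulr1 addr0.
  by apply: (mulfI q_neq0); rewrite -natrM [in RHS]qn_eq natrD natrM; field.
exists (rcons w a); split => //; rewrite /inL wa_n natr_nat andbT.
case: w Lw wm {wa_n} => [_ | b w /andP[+ _]] //=.
rewrite valpq_nil => /esym/eqP; rewrite pnatr_eq0 => /eqP m0.
by rewrite m0 mul0n add0n in qn_eq; rewrite -qn_eq -lt0n muln_gt0 q_gt0.
Qed.

Lemma inL_extend (w : seq 'I_p) h : w != [::] -> inL q w ->
  exists u : h.-tuple 'I_p, inL q (w ++ u).
Proof.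
move=> w_neq0 Lw; elim: h => [|h [u Lwu]]; first by exists [tuple]; rewrite cats0.
have /natrP[m wum] : valpq q (w ++ u) \is a Num.nat by case/andP: Lwu.
pose a := Ordinal (leq_trans (ltn_pmod (q - p * m %% q) q_gt0) (ltnW q_lt_p)).
have wu_neq0 : w ++ u != [::] by case: (w) w_neq0.
exists [tuple of rcons u a]; rewrite /= -cats1 catA (inL_cat _ wu_neq0 Lwu wum).
rewrite /= expn1 expn0 muln1 muln0 addn0 /dvdn modnDmr -modnDml subnKC ?modnn //.
by rewrite ltnW ?ltn_pmod.
Qed.

Lemma exists_quotL_residue_class h r :
  exists w, [/\ inL q w, w != [::] & quotL q h w = residue_class h r].
Proof.
have [w [Lw wr]] := exists_inL_valpq (r + q ^ h).
have w_neq0 := valpq_neq_nil (ltn_addl r (qX_gt0 h)) wr.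
exists w; split; rewrite ?(quotL_residue_class h w_neq0 Lw wr) //.
by rewrite -residue_class_mod modnDr residue_class_mod.
Qed.

Lemma residue_class_neq0 h r : residue_class h r != set0.
Proof.
have [w [Lw w_neq0 <-]] := exists_quotL_residue_class h r.
by have [u Lwu] := inL_extend h w_neq0 Lw; apply/set0Pn; exists u; rewrite inE.
Qed.

Hypothesis p_q_coprime : coprime p q.

Let pX_qX_coprime h : coprime (p ^ h) (q ^ h).
Proof. exact: coprimeXr (coprimeXl h p_q_coprime). Qed.

Lemma residue_class_unique h (r r' : 'I_(q ^ h)) u :
  u \in residue_class h r -> u \in residue_class h r' -> r = r'.
Proof.
rewrite !inE /dvdn => /eqP ur /eqP ur'; apply/ord_inj/eqP.
rewrite -(modn_small (ltn_ord r)) -(modn_small (ltn_ord r')).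
rewrite -(eqn_modMl_coprime _ _ (pX_qX_coprime h)).
by rewrite -(eqn_modDr (valnum u)) ur ur'.
Qed.

Lemma mem_residue_class h (u : h.-tuple 'I_p) :
  exists r : 'I_(q ^ h), u \in residue_class h r.
Proof.
have [x ux] := coprime_dvdn_addM_exists (valnum u) (qX_gt0 h) (pX_qX_coprime h).
by exists (Ordinal (ltn_pmod x (qX_gt0 h))); rewrite residue_class_mod inE.
Qed.

Definition residue_classes h := [set residue_class h r | r : 'I_(q ^ h)].

Lemma residue_class_inj h : injective (fun r : 'I_(q ^ h) => residue_class h r).
Proof.
move=> r r' /= eq_rr'; have /set0Pn[u ur] := residue_class_neq0 h r.
by apply: (residue_class_unique ur); rewrite -eq_rr'.
Qed.

Lemma trivIset_residue_classes h : trivIset (residue_classes h).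
Proof.
apply/trivIsetP => _ _ /imsetP[r _ ->] /imsetP[r' _ ->]; apply: contraR.
by rewrite -setI_eq0 => /set0Pn[u /setIP[ur ur']]; rewrite (residue_class_unique ur ur').
Qed.

Lemma residue_classesP h X : X \in residue_classes h <->
  exists w, [/\ inL q w, w <> [::] & X = quotL q h w].
Proof.
split => [/imsetP[r _ ->] | [w [Lw /eqP w_neq0 ->]]].
  by have [w [Lw /eqP w_neq0 wr]] := exists_quotL_residue_class h r; exists w.
have /natrP[N wN] : valpq q w \is a Num.nat by case/andP: Lw.
apply/imsetP; exists (Ordinal (ltn_pmod N (qX_gt0 h))); rewrite ?in_setT //=.
by rewrite (quotL_residue_class h w_neq0 Lw wN) residue_class_mod.
Qed.

Lemma partition_residue_classes h :
  partition (residue_classes h) [set: h.-tuple 'I_p].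
Proof.
apply/and3P; split; last 1 first.
- by apply/imsetP => -[r _ /esym/eqP]; rewrite (negbTE (residue_class_neq0 h r)).
- rewrite cover_imset; apply/eqP/setP => u; rewrite in_setT.
  by have [r ur] := mem_residue_class u; apply/bigcupP; exists r.
- exact: trivIset_residue_classes.
Qed.

Lemma card_residue_classes h : #|residue_classes h| = (q ^ h)%N.
Proof. by rewrite card_imset ?card_ord //; apply: residue_class_inj. Qed.

End RationalBase.

Theorem mainTheorem9 (p q : nat) (hqp : (1 < q < p)%N) (hcop : coprime p q)
  (h : nat) :
  exists F : {set {set h.-tuple 'I_p}},
    (forall X : {set h.-tuple 'I_p},
        X \in F <-> exists w : seq 'I_p, [/\ inL q w, w <> [::] & X = quotL q h w])
    /\ partition F [set: h.-tuple 'I_p]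
    /\ #|F| = (q ^ h)%N.
Proof.
case/andP: hqp => /ltnW q_gt0 q_lt_p.
exists (residue_classes p q h); split; first exact: residue_classesP.
by split; [apply: partition_residue_classes | apply: card_residue_classes].
Qed.
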